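(* With the notation below, let $x\in X^{(\boldsymbol\alpha)}$. Then there is a bijection between $H_1\cdot[x]_{H_2}$ (a subset of the orbit set $H_2\backslash X^{(\boldsymbol\alpha)}$ for the action $\varGamma_2$) and $F^{(\boldsymbol\alpha)}\mathbb Z^N\backslash\mathbb Z^N$ that commutes with the action of $H_1$. Here $H_1$ acts on $H_2\backslash X^{(\boldsymbol\alpha)}$ by $f\cdot[z]_{H_2}=[\varGamma_1(f,z)]_{H_2}$ and on $F^{(\boldsymbol\alpha)}\mathbb Z^N\backslash\mathbb Z^N$ by $f\cdot[\boldsymbol\omega]=[\boldsymbol\omega+\psi(f)]$.
   Context: Fix $N\ge1$, integers $m_j\ge1$, $p_j\ge0$ ($1\le j\le N$), and an integer matrix $(B_{j,k})$. For $m\ge1,p\ge0$ let $\Lambda(m,p)=\{(\lambda_i)_{i\in\mathbb Z}: \lambda_i\in\mathbb Z,\ \lambda_1=0,\ \lambda_i\le\lambda_{i+1},\ \lambda_{i+m}=\lambda_i+p\ \forall i\}$, and for a positive common divisor $\alpha$ of $m,p$ (every positive integer divides $0$) let $\Lambda^{(\alpha)}(m,p)=\{\lambda\in\Lambda(m/\alpha,p/\alpha):\lambda\notin\Lambda(m/\alpha',p/\alpha')$ for every common divisor $\alpha'>\alpha\}$. Let $X_1=\mathbb Z^N$ (column vectors), $X_2=\prod_{j}\Lambda(m_j,p_j)$, elements $\boldsymbol\lambda=(\lambda^{(j)}_i)$. $H_2$ is the free abelian group on $s_1,\dots,s_N$; for $g=\sum_kn_ks_k$: $\Upsilon(g,\boldsymbol\lambda)=(\lambda^{(j)}_{n_j+i}-\lambda^{(j)}_{n_j+1})_{i,j}$,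 $\varphi(g,\boldsymbol\omega,\boldsymbol\lambda)=\boldsymbol\omega+(\lambda^{(j)}_{n_j+1}+\sum_kB_{j,k}n_k)_j$, $\varGamma_2(g,(\boldsymbol\omega,\boldsymbol\lambda))=(\varphi(g,\boldsymbol\omega,\boldsymbol\lambda),\Upsilon(g,\boldsymbol\lambda))$. $H_1$ is an abelian group with a surjective group homomorphism $\psi:H_1\to\mathbb Z^N$, acting by $\varGamma_1(f,(\boldsymbol\omega,\boldsymbol\lambda))=(\boldsymbol\omega+\psi(f),\boldsymbol\lambda)$. Fix $\boldsymbol\alpha=(\alpha_j)$ with $\alpha_j$ a positive common divisor of $m_j,p_j$; $X^{(\boldsymbol\alpha)}=X_1\times\prod_j\Lambda^{(\alpha_j)}(m_j,p_j)$ (invariant under $\varGamma_1,\varGamma_2$); $F^{(\boldsymbol\alpha)}_{j,k}=(\delta_{j,k}p_k+B_{j,k}m_k)/\alpha_k$. $F^{(\boldsymbol\alpha)}\mathbb Z^N\backslash\mathbb Z^N$ is the set of cosets of the subgroup $F^{(\boldsymbol\alpha)}\mathbb Z^N\subset\mathbb Z^N$. *)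

From HB Require Import structures.
From mathcomp Require Import all_boot all_order all_algebra.
Set Implicit Arguments. Unset Strict Implicit. Unset Printing Implicit Defensive.
Import Order.TTheory GRing.Theory Num.Theory.
Local Open Scope ring_scope.

Definition Lam (m p : nat) (l : int -> int) : Prop :=
  l 1 = 0 /\ (forall i : int, l i <= l (i + 1)) /\
  (forall i : int, l (i + m%:Z) = l i + p%:Z).

Definition LamPrim (a m p : nat) (l : int -> int) : Prop :=
  Lam (m %/ a) (p %/ a) l /\
  (forall a' : nat, (a < a')%N -> (a' %| m)%N -> (a' %| p)%N ->
     ~ Lam (m %/ a') (p %/ a') l).

(* X = X_1 x X_2 (ambient): omega in Z^N (column vector), lambda^(j) : Z -> Z *)
Definition X (N : nat) : Type := ('cV[int]_N * ('I_N -> int -> int))%type.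

Definition InXalpha (N : nat) (m p alpha : 'I_N -> nat) (z : X N) : Prop :=
  forall j : 'I_N, LamPrim (alpha j) (m j) (p j) (z.2 j).

(* Gamma_2(g, (omega, lambda)), g = sum_k n_k s_k identified with (n_k)_k *)
Definition Gamma2 (N : nat) (B : 'M[int]_N) (g : 'cV[int]_N) (z : X N) : X N :=
  (z.1 + \col_j (z.2 j (g j 0 + 1)) + B *m g,
   fun j i => z.2 j (g j 0 + i) - z.2 j (g j 0 + 1)).

Definition Gamma1 (N : nat) (H1 : zmodType) (psi : H1 -> 'cV[int]_N)
  (f : H1) (z : X N) : X N := (z.1 + psi f, z.2).

Definition orbit2 (N : nat) (B : 'M[int]_N) (z : X N) : X N -> Prop :=
  fun y => exists g : 'cV[int]_N, Gamma2 B g z = y.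

Definition Fmat (N : nat) (m p alpha : 'I_N -> nat) (B : 'M[int]_N) : 'M[int]_N :=
  \matrix_(j, k) ((((j == k)%:Z * (p k)%:Z + B j k * (m k)%:Z) %/ (alpha k)%:Z)%Z).

Definition coset (N : nat) (F : 'M[int]_N) (w : 'cV[int]_N) : 'cV[int]_N -> Prop :=
  fun v => exists u : 'cV[int]_N, v = w + F *m u.

From HB Require Import structures.
From mathcomp Require Import all_boot all_order all_algebra.
From Stdlib Require Import FunctionalExtensionality PropExtensionality.
Import Order.TTheory GRing.Theory Num.Theory.
Local Open Scope ring_scope.

(* A pair (s, c) of integers is a period of a sequence l : Z -> Z when
   l (s + i) = l i + c for all i; periods form a subgroup of Z^2.  For l in
   Lambda^(a)(m, p) the periods are exactly the integer multiples of
   (m/a, p/a): by Bezout, gcd(g, m/a) is again a period, and primitivity of l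
   forbids any proper divisor of m/a to be a period.
   Consequently, an element g of H_2 fixes the sequence part lambda of a point
   of X^(alpha) iff g = diag(m/alpha) u for some u in Z^N, and it then shifts
   omega by exactly F^(alpha) u, because F^(alpha) = diag(p/alpha) +
   B diag(m/alpha).  Hence two points Gamma_1(f, x), Gamma_1(f', x) lie in the
   same H_2-orbit iff psi f and psi f' are congruent modulo F^(alpha) Z^N.
   The bijection sends the orbit [Gamma_1(f, x)] to the coset of psi f; it is
   well defined and injective by the previous equivalence, surjective since psi
   is onto, and H_1-equivariant because Gamma_1 commutes with Gamma_2. *)

Section Periods.
Variable l : int -> int.

Definition period (s c : int) : Prop := forall i, l (s + i) = l i + c.

Lemma periodD s c t d : period s c -> period t d -> period (s + t) (c + d).
Proof. by move=> hs ht i; rewrite -addrA hs ht -addrA (addrC d). Qed.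

Lemma periodN s c : period s c -> period (- s) (- c).
Proof.
by move=> hs i; have := hs (- s + i); rewrite addrA subrr add0r => ->; rewrite addrK.
Qed.

Lemma periodMz {s c} (k : int) : period s c -> period (k * s) (k * c).
Proof.
have periodMn (n : nat) : period s c -> period (n%:Z * s) (n%:Z * c).
  move=> hs; elim: n => [|n IH] i; first by rewrite !mul0r add0r addr0.
  by rewrite intS !mulrDl !mul1r; apply: periodD.
move=> hs; case: k => n; first exact: periodMn.
by rewrite NegzE !mulNr; apply/periodN/periodMn.
Qed.

Lemma period_value {s c} : period s c -> c = l s - l 0.
Proof. by move=> hs; rewrite -[s]addr0 hs addrC addKr. Qed.

Lemma period_ge0 {n : nat} {c} :
  (forall i, l i <= l (i + 1)) -> period n%:Z c -> 0 <= c.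
Proof.
move=> lmon hn; have mono j : l 0 <= l (0 + j%:Z).
  elim: j => [|j IH]; first by rewrite addr0.
  by rewrite (le_trans IH) // intS (addrC 1) addrA; exact: lmon.
by have := mono n; rewrite add0r -[n%:Z]addr0 hn lerDl.
Qed.

Lemma Lam_period {M P} : Lam M P l -> period M%:Z P%:Z.
Proof. by move=> [_ [_ lper]] i; rewrite addrC lper. Qed.

Section Primitive.
Variables a m p : nat.
Hypotheses (a_gt0 : (0 < a)%N) (a_dvd_m : (a %| m)%N) (a_dvd_p : (a %| p)%N)
  (m_gt0 : (0 < m)%N) (lprim : LamPrim a m p l).

Let M := (m %/ a)%N.
Let P := (p %/ a)%N.

Lemma basic_period : period M%:Z P%:Z.
Proof. exact: Lam_period lprim.1. Qed.

Lemma M_gt0 : (0 < M)%N.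
Proof. by rewrite divn_gt0 // dvdn_leq. Qed.

Lemma primitive_period (d : nat) c : (d %| M)%N -> period d%:Z c -> d = M.
Proof.
move=> dM hd; have [[l1 [lmon _]] hprim] := lprim.
case: c hd => [cn|n] hd; last by have := period_ge0 lmon hd.
set q := (M %/ d)%N; have hM : M = (q * d)%N by rewrite divnK.
have hP : P = (q * cn)%N.
  apply/eqP; rewrite -eqz_nat !PoszM.
  rewrite (period_value basic_period) (period_value (periodMz q hd)).
  by rewrite -PoszM -hM.
have q_gt0 : (0 < q)%N by move: M_gt0; rewrite hM muln_gt0 => /andP[].
suff q1 : q = 1%N by rewrite hM q1 mul1n.
case: (leqP q 1) => [|q_gt1]; first by move=> ?; apply/eqP; rewrite eqn_leq q_gt0 andbT.
have aq_gt0 : (0 < a * q)%N by rewrite muln_gt0 a_gt0.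
have hm' : m = (a * q * d)%N by rewrite -(divnK a_dvd_m) -/M hM mulnC mulnA.
have hp' : p = (a * q * cn)%N by rewrite -(divnK a_dvd_p) -/P hP mulnC mulnA.
exfalso; apply: (hprim (a * q)%N).
- by rewrite -{1}(muln1 a) ltn_pmul2l.
- by rewrite hm' dvdn_mulr.
- by rewrite hp' dvdn_mulr.
rewrite hm' hp' !mulKn //; split=> //; split=> // i.
by rewrite addrC hd.
Qed.

Lemma LamPrim_periods g c :
  period g c -> g = (g %/ M%:Z)%Z * M%:Z /\ c = (g %/ M%:Z)%Z * P%:Z.
Proof.
move=> hg; have [u [v Huv]] := Bezoutz g M%:Z.
have hgcd : period (gcdn `|g|%N M)%:Z (u * c + v * P%:Z).
  by rewrite -[_%:Z]/(gcdz g M%:Z) -Huv; apply: periodD; apply: periodMz;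
    [exact: hg | exact: basic_period].
have gcdM : gcdn `|g|%N M = M.
  by apply: primitive_period hgcd; exact: dvdn_gcdr.
have /dvdzP[k gE] : (M%:Z %| g)%Z by rewrite -gcdM [_%:Z]/(gcdz g M%:Z) dvdz_gcdl.
have M0 : M%:Z != 0 by rewrite eqz_nat -lt0n M_gt0.
rewrite gE mulzK //; split=> //.
by rewrite (period_value hg) gE (period_value (periodMz k basic_period)).
Qed.

End Primitive.
End Periods.
Arguments periodMz {l s c}.
Arguments Lam_period {l M P}.
Arguments LamPrim_periods {l a m p} _ _ _ _ _ {g c}.

Section Orbits.
Variables (G : zmodType) (T : Type) (act : G -> T -> T).

Definition orbit (y : T) : T -> Prop := fun y' => exists g, act g y = y'.

Lemma orbit_map (phi : T -> T) y y' :
  (forall g z, act g (phi z) = phi (act g z)) ->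
  orbit y = orbit y' -> orbit (phi y) = orbit (phi y').
Proof.
have trans z z' : orbit z = orbit z' -> forall g, exists g', act g z = act g' z'.
  move=> e g; have : orbit z (act g z) by exists g.
  by rewrite e => -[g' <-]; exists g'.
move=> phiC e; apply: functional_extensionality => v; apply: propositional_extensionality.
by split=> -[g <-]; rewrite phiC;
  [have [g' ->] := trans _ _ e g | have [g' ->] := trans _ _ (esym e) g];
  exists g'; rewrite phiC.
Qed.

Hypothesis actM : forall g h y, act g (act h y) = act (h + g) y.

Lemma orbit_eq y y' : act 0 y = y -> act 0 y' = y' ->
  orbit y = orbit y' <-> exists g, act g y = y'.
Proof.
move=> y0 y'0; split=> [e|[g hg]].
  have : orbit y' y' by exists 0.
  by rewrite -e.
have back : act (- g) y' = y by rewrite -hg actM subrr y0.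
apply: functional_extensionality => v; apply: propositional_extensionality.
split=> -[h <-]; first by exists (- g + h); rewrite -actM back.
by exists (g + h); rewrite -actM hg.
Qed.

End Orbits.
Arguments orbit {G T} act y.
Arguments orbit_map {G T act} phi {y y'}.
Arguments orbit_eq {G T act} actM {y y'}.

(* The cosets w + F Z^N are the orbits of translation by F Z^N, so two of
   them coincide iff their representatives differ by an element of F Z^N. *)
Lemma coset_eq N (F : 'M[int]_N) w w' :
  coset F w = coset F w' <-> exists u, w' = w + F *m u.
Proof.
have cosetE v : coset F v = orbit (fun u v => v + F *m u) v.
  apply: functional_extensionality => v'; apply: propositional_extensionality.
  by split=> -[u e]; exists u.
rewrite !cosetE orbit_eq ?mulmx0 ?addr0 //; first by split=> -[u hu]; exists u.
by move=> *; rewrite mulmxDr addrA.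
Qed.

Lemma coset_translate N (F : 'M[int]_N) a b c :
  coset F a = coset F b -> coset F (a + c) = coset F (b + c).
Proof. by move=> /coset_eq[u hu]; apply/coset_eq; exists u; rewrite hu addrAC. Qed.

Section Actions.
Variables (N : nat) (B : 'M[int]_N).

Lemma Gamma2_comp g h z : Gamma2 B g (Gamma2 B h z) = Gamma2 B (h + g) z.
Proof.
case: z => w l; rewrite /Gamma2 /=; congr pair.
  set c := \col_j _; set c' := \col_j _; set c'' := \col_j _.
  have -> : c' = c'' - c by apply/matrixP => j k; rewrite !mxE addrA.
  by rewrite mulmxDr addrACA (addrAC w) -(addrA _ c) (addrC c) subrK addrA.
apply: functional_extensionality => j; apply: functional_extensionality => i.
by rewrite !mxE opprB addrA subrK !addrA.
Qed.

Lemma Gamma2_0 z : (forall j, z.2 j 1 = 0) -> Gamma2 B 0 z = z.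
Proof.
case: z => w l /= l1; rewrite /Gamma2 /= mulmx0 addr0; congr pair.
  by apply/matrixP => j k; rewrite !mxE add0r l1 addr0.
apply: functional_extensionality => j; apply: functional_extensionality => i.
by rewrite !mxE !add0r l1 subr0.
Qed.

Lemma Gamma2_Gamma1 (H1 : zmodType) (psi : H1 -> 'cV[int]_N) g f z :
  Gamma2 B g (Gamma1 psi f z) = Gamma1 psi f (Gamma2 B g z).
Proof.
case: z => w l; rewrite /Gamma2 /Gamma1 /=; congr pair.
by rewrite -!addrA; congr (_ + _); rewrite addrC -addrA.
Qed.

End Actions.

Section Stabilizer.
Variables (N : nat) (m p alpha : 'I_N -> nat) (B : 'M[int]_N).
Hypotheses (m_gt0 : forall j, (0 < m j)%N) (alpha_gt0 : forall j, (0 < alpha j)%N)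
  (alpha_dvd_m : forall j, (alpha j %| m j)%N)
  (alpha_dvd_p : forall j, (alpha j %| p j)%N).

Definition Mdiag : 'M[int]_N := diag_mx (\row_k (m k %/ alpha k)%N%:Z).
Definition Pdiag : 'M[int]_N := diag_mx (\row_k (p k %/ alpha k)%N%:Z).

Lemma Fmat_decomp : Fmat m p alpha B = Pdiag + B *m Mdiag.
Proof.
rewrite mul_mx_diag; apply/matrixP => j k; rewrite !mxE.
have a0 : (alpha k)%:Z != 0 by rewrite eqz_nat -lt0n.
rewrite -{1}(divnK (alpha_dvd_m k)) -{1}(divnK (alpha_dvd_p k)) !PoszM.
case: eqP => [->|_]; first by rewrite mul1r mulrA -mulrDl mulzK // mulr1n.
by rewrite mul0r add0r mulrA mulzK // mulr0n add0r.
Qed.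

Lemma Gamma2_lattice (l : 'I_N -> int -> int) w u :
  (forall j, Lam (m j %/ alpha j) (p j %/ alpha j) (l j)) ->
  Gamma2 B (Mdiag *m u) (w, l) = (w + Fmat m p alpha B *m u, l).
Proof.
move=> hl; have l1 j : l j 1 = 0 by have [] := hl j.
have gE j : (Mdiag *m u) j 0 = (m j %/ alpha j)%N%:Z * u j 0.
  by rewrite mul_diag_mx !mxE.
have shift j i : l j ((Mdiag *m u) j 0 + i) = l j i + u j 0 * (p j %/ alpha j)%N%:Z.
  by rewrite gE mulrC (periodMz _ (Lam_period (hl j))).
rewrite /Gamma2 /= Fmat_decomp mulmxDl -mulmxA -addrA; congr pair.
  congr (w + (_ + _)); apply/matrixP => j k.
  by rewrite (ord1 k) [LHS]mxE shift l1 add0r mul_diag_mx !mxE mulrC.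
apply: functional_extensionality => j; apply: functional_extensionality => i.
by rewrite !shift l1 add0r addrK.
Qed.

Lemma stabilizer {l : 'I_N -> int -> int} {w g} :
  (forall j, LamPrim (alpha j) (m j) (p j) (l j)) ->
  (Gamma2 B g (w, l)).2 = l -> exists u, g = Mdiag *m u.
Proof.
move=> hl e; exists (\col_j divz (g j 0) (m j %/ alpha j)%N%:Z).
apply/matrixP => j k; rewrite (ord1 k) mul_diag_mx !mxE mulrC.
have hper : period (l j) (g j 0) (l j (g j 0 + 1)).
  by move=> i; have := congr1 (fun l' => l' j i) e => /= <-; rewrite subrK.
by have [] := LamPrim_periods (alpha_gt0 j) (alpha_dvd_m j) (alpha_dvd_p j)
  (m_gt0 j) (hl j) hper.
Qed.

Lemma Gamma2_fixed_lambda (l : 'I_N -> int -> int) w w' :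
  (forall j, LamPrim (alpha j) (m j) (p j) (l j)) ->
  (exists g, Gamma2 B g (w, l) = (w', l)) <->
  (exists u, w' = w + Fmat m p alpha B *m u).
Proof.
move=> hl; have hLam j := (hl j).1.
split=> [[g e]|[u ->]]; last by exists (Mdiag *m u); rewrite Gamma2_lattice.
have [u gE] := stabilizer hl (congr1 snd e).
by exists u; move: e; rewrite gE Gamma2_lattice // => -[].
Qed.

End Stabilizer.

Section Classification.
Variables (N : nat) (m p alpha : 'I_N -> nat) (B : 'M[int]_N).
Variables (H1 : zmodType) (psi : H1 -> 'cV[int]_N).
Hypotheses (m_gt0 : forall j, (0 < m j)%N) (alpha_gt0 : forall j, (0 < alpha j)%N)
  (alpha_dvd_m : forall j, (alpha j %| m j)%N)
  (alpha_dvd_p : forall j, (alpha j %| p j)%N)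
  (psi_add : forall a b : H1, psi (a + b) = psi a + psi b).
Variables (x : X N) (hx : InXalpha m p alpha x).

Let F := Fmat m p alpha B.

Lemma orbit_Gamma1_eq f f' :
  orbit2 B (Gamma1 psi f x) = orbit2 B (Gamma1 psi f' x) <->
  coset F (psi f) = coset F (psi f').
Proof.
have normalized f0 : Gamma2 B 0 (Gamma1 psi f0 x) = Gamma1 psi f0 x.
  by apply: Gamma2_0 => j; have [[]] := hx j.
rewrite [orbit2 _ _ = _](orbit_eq (@Gamma2_comp N B)) // coset_eq.
rewrite [Gamma1 _ _ _]surjective_pairing [Gamma1 _ f' _]surjective_pairing /=.
rewrite (@Gamma2_fixed_lambda _ _ _ _ B m_gt0 alpha_gt0 alpha_dvd_m alpha_dvd_p) //.
by split=> -[u hu]; exists u; [apply: (addrI x.1); rewrite addrA | rewrite hu addrA].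
Qed.

Definition orbit_class (S : X N -> Prop) : 'cV[int]_N -> Prop :=
  fun v => exists f, S = orbit2 B (Gamma1 psi f x) /\ coset F (psi f) v.

Lemma orbit_classE f : orbit_class (orbit2 B (Gamma1 psi f x)) = coset F (psi f).
Proof.
apply: functional_extensionality => v; apply: propositional_extensionality.
split=> [[f' [/orbit_Gamma1_eq -> //]]|hv]; by exists f.
Qed.

Lemma orbit_Gamma1_act f f0 z :
  orbit2 B z = orbit2 B (Gamma1 psi f0 x) ->
  orbit2 B (Gamma1 psi f z) = orbit2 B (Gamma1 psi (f0 + f) x).
Proof.
move=> e; have -> : Gamma1 psi (f0 + f) x = Gamma1 psi f (Gamma1 psi f0 x).
  by rewrite /Gamma1 /= psi_add addrA.
by apply: (orbit_map (Gamma1 psi f)) e => g y; exact: Gamma2_Gamma1.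
Qed.

End Classification.
Arguments orbit_class {N} m p alpha B {H1} psi x S _.
Arguments orbit_classE {N m p alpha} B {H1} psi _ _ _ _ {x} _ f.
Arguments orbit_Gamma1_eq {N m p alpha} B {H1} psi _ _ _ _ {x} _ f f'.
Arguments orbit_Gamma1_act {N} B {H1 psi} _ {x} f {f0 z} _.

Theorem mainTheorem7 (N : nat) (m p alpha : 'I_N -> nat) (B : 'M[int]_N)
  (H1 : zmodType) (psi : H1 -> 'cV[int]_N)
  (hN : (1 <= N)%N)
  (hm : forall j, (1 <= m j)%N)
  (halpha : forall j, (0 < alpha j)%N)
  (halpha_m : forall j, (alpha j %| m j)%N)
  (halpha_p : forall j, (alpha j %| p j)%N)
  (psi_add : forall a b : H1, psi (a + b) = psi a + psi b)
  (psi_surj : forall v : 'cV[int]_N, exists f : H1, psi f = v)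
  (x : X N) (hx : InXalpha m p alpha x) :
  let F := Fmat m p alpha B in
  (* H_1 . [x]_{H_2} : the set of orbits [Gamma_1(f,x)]_{H_2} *)
  let inH1x := fun S : X N -> Prop =>
    exists f : H1, S = orbit2 B (Gamma1 psi f x) in
  (* F Z^N \ Z^N : the set of cosets *)
  let inQ := fun C : 'cV[int]_N -> Prop => exists w, C = coset F w in
  exists Phi : (X N -> Prop) -> ('cV[int]_N -> Prop),
    (forall S, inH1x S -> inQ (Phi S)) /\
    (forall S T, inH1x S -> inH1x T -> Phi S = Phi T -> S = T) /\
    (forall C, inQ C -> exists S, inH1x S /\ Phi S = C) /\
    (* H_1-equivariance: Phi (f . [z]) = f . Phi [z] *)
    (forall (f : H1) (z : X N) (w : 'cV[int]_N),
        inH1x (orbit2 B z) -> Phi (orbit2 B z) = coset F w ->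
        Phi (orbit2 B (Gamma1 psi f z)) = coset F (w + psi f)).
Proof.
move=> F inH1x inQ.
have classE := orbit_classE B psi hm halpha halpha_m halpha_p hx.
have same_orbit f f' := orbit_Gamma1_eq B psi hm halpha halpha_m halpha_p hx f f'.
exists (orbit_class m p alpha B psi x); split; [|split; [|split]].
- by move=> S [f ->]; exists (psi f); rewrite classE.
- by move=> S T [f ->] [f' ->]; rewrite !classE => /same_orbit.
- move=> C [w ->]; have [f <-] := psi_surj w.
  by exists (orbit2 B (Gamma1 psi f x)); split; [exists f | rewrite classE].
- move=> f z w [f0 z_orbit]; rewrite z_orbit classE => /coset_translate w_coset.
  by rewrite (orbit_Gamma1_act B psi_add f z_orbit) classE psi_add w_coset.
Qed.
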